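(* Let $P$ be a purely atomic Borel probability measure on $\mathbb{R}$ with support on $n$ points. Then any mean-preserving contraction $Q$ of $P$ is a mixture of simple mean-preserving contractions of $P$ each having support on at most $n$ points.
   Context: Let $P$ have support $\{a_1<\dots<a_n\}$ with masses $\vec p=(p_1,\dots,p_n)$, all positive, and $\vec{pa}=(p_1a_1,\dots,p_na_n)$. A purely atomic probability measure $Q$ with support on distinct points $b_1,\dots,b_m$ and positive masses $\vec q=(q_1,\dots,q_m)$ is a simple mean-preserving contraction (smpc) of $P$ if there is a non-negative row-stochastic $n\times m$ matrix $F$ with $\vec pF=\vec q$ and $(\vec{pa})F=(q_1b_1,\dots,q_mb_m)$. A Borel probability measure $R$ on $\mathbb{R}$ is a mean-preserving contraction (mpc) of $P$ if there is a sequence of smpcs of $P$ converging weakly to $R$. Mixtures of smpcs are convex combinations of the associated measures (for non-purely-atomic mpcs, understood via weak limits). *)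

From HB Require Import structures.
From mathcomp Require Import all_boot all_order all_algebra.
From mathcomp Require Import all_classical all_reals all_analysis.
From Stdlib Require List.
Set Implicit Arguments. Unset Strict Implicit. Unset Printing Implicit Defensive.
Import Order.TTheory GRing.Theory Num.Theory.
Import numFieldNormedType.Exports.
Local Open Scope classical_set_scope.
Local Open Scope ring_scope.

(* A purely atomic finite measure, given by its (finitely many) support
   points and their masses. *)
Record atomic (R : realType) := Atomic {
  asz : nat;
  apt : 'I_asz -> R;
  ams : 'I_asz -> R }.
Arguments asz {R}.
Arguments apt {R}.
Arguments ams {R}.

Definition aint (R : realType) (S : atomic R) (f : R -> R) : R :=
  \sum_(j < asz S) ams S j * f (apt S j).

(* S is a simple mean-preserving contraction of P = sum_i p i delta_(a i) *)
Definition is_smpc (R : realType) (n : nat) (a p : 'I_n -> R) (S : atomic R) : Prop :=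
  injective (apt S) /\ (forall j, 0 < ams S j) /\
  exists F : 'M[R]_(n, asz S),
    (forall i j, 0 <= F i j) /\
    (forall i, \sum_(j < asz S) F i j = 1) /\
    (forall j, \sum_(i < n) p i * F i j = ams S j) /\
    (forall j, \sum_(i < n) (p i * a i) * F i j = ams S j * apt S j).

Definition bounded_continuous (R : realType) (f : R -> R) : Prop :=
  continuous f /\ exists M : R, forall x, `|f x| <= M.

Definition weak_cvg (R : realType) (I : nat -> (R -> R) -> R)
    (Q : probability R R) : Prop :=
  forall f : R -> R, bounded_continuous f ->
    (fun k => ((I k f)%:E)) @ \oo --> (\int[Q]_x (f x)%:E)%E.

Definition is_mpc (R : realType) (n : nat) (a p : 'I_n -> R)
    (Q : probability R R) : Prop :=
  exists S : nat -> atomic R, (forall k, is_smpc a p (S k)) /\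
    weak_cvg (fun k => aint (S k)) Q.

Definition mixture_int (R : realType) (s : seq (R * atomic R)) (f : R -> R) : R :=
  \sum_(x <- s) x.1 * aint x.2 f.

Definition is_mixture_of (R : realType) (C : atomic R -> Prop)
    (s : seq (R * atomic R)) : Prop :=
  (forall x, List.In x s -> 0 <= x.1 /\ C x.2) /\ \sum_(x <- s) x.1 = 1.

(* Q is a mixture of elements of C: a weak limit of finite convex
   combinations of elements of C (for purely atomic Q, an exact
   convex combination is such a limit). *)
Definition is_mixture (R : realType) (C : atomic R -> Prop)
    (Q : probability R R) : Prop :=
  exists s : nat -> seq (R * atomic R),
    (forall k, is_mixture_of C (s k)) /\ weak_cvg (fun k => mixture_int (s k)) Q.

From HB Require Import structures.
From mathcomp Require Import all_boot all_order all_algebra.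
From mathcomp Require Import all_classical all_reals all_analysis.
From mathcomp Require Import zify ring lra.
Set Implicit Arguments. Unset Strict Implicit. Unset Printing Implicit Defensive.
Import Order.TTheory GRing.Theory Num.Theory.
Local Open Scope ring_scope.

(* An smpc of [P] with atoms [b_1, ..., b_m] is a nonnegative row-stochastic
   matrix [F] whose column [j], weighted by [p], has barycentre [b_j].  Suppose
   [F] uses more than [n] columns, and look for directions [D] supported on the
   support of [F], with zero row sums and preserving every column barycentre.
   A column with a single nonzero entry sits on an atom [a_i = b_j] and imposes
   nothing, so there are at most [n + #(columns with >= 2 entries)] equations,
   fewer than the number of support entries: a nonzero such [D] exists.  Moving
   along [+D] and [-D] until an entry vanishes writes [F] as a convex
   combination of two smpc matrices with smaller support; by induction on the
   support, [F] is a mixture of smpcs with at most [n] atoms.  Replacing each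
   smpc of a sequence converging to [Q] by such a mixture changes no integral,
   so the mixtures converge to [Q] as well. *)

Lemma exists_nonzero_left_kernel (K : fieldType) r c (A : 'M[K]_(r, c)) :
  (c < r)%N -> exists2 u : 'rV[K]_r, u != 0 & u *m A = 0.
Proof.
move=> lt_cr; have : kermx A != 0.
  by rewrite kermx_eq0 /row_free; have := rank_leq_col A; lia.
by case/rowV0Pn => u /sub_kermxP uA nz_u; exists u.
Qed.

Section Support.
Variables (R : realFieldType) (n m : nat).
Implicit Types F D : 'I_n -> 'I_m -> R.

Definition supp F := [set k : 'I_n * 'I_m | F k.1 k.2 != 0].
Definition col_supp F j := [set i | F i j != 0].
Definition used_cols F := [set j | (0 < #|col_supp F j|)%N].
Definition mixed_cols F := [set j | (1 < #|col_supp F j|)%N].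

Lemma unused_col_eq0 F i j : j \notin used_cols F -> F i j = 0.
Proof.
rewrite inE card_gt0 negbK => /eqP col0; apply/eqP; apply: contraT => Fij.
have : i \in col_supp F j by rewrite inE.
by rewrite col0 inE.
Qed.

Lemma card_supp F : #|supp F| = (\sum_(j < m) #|col_supp F j|)%N.
Proof.
rewrite -sum1_card big_mkcond /=.
rewrite (eq_bigr (fun k : 'I_n * 'I_m => if F k.1 k.2 != 0%R then 1 else 0)%N);
  last by move=> k _; rewrite inE.
rewrite -(pair_bigA _ (fun i j => if F i j != 0%R then 1 else 0)%N).
rewrite exchange_big.
apply: eq_bigr => j _; rewrite -sum1_card [RHS]big_mkcond.
by apply: eq_bigr => i _; rewrite inE.
Qed.

Lemma card_used_mixed_lt F :
  (n < #|used_cols F|)%N -> (n + #|mixed_cols F| < #|supp F|)%N.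
Proof.
have card_cols (k : nat) : #|[set j | (k < #|col_supp F j|)%N]| =
    (\sum_(j < m) (k < #|col_supp F j|))%N.
  rewrite -sum1_card big_mkcond.
  by apply: eq_bigr => j _; rewrite inE; case: ifP.
suff : (#|used_cols F| + #|mixed_cols F| <= #|supp F|)%N by lia.
rewrite !card_cols card_supp -big_split /=; apply: leq_sum => j _.
by case: #|col_supp F j| => [|[|k]].
Qed.

Lemma exists_neg_entry D i0 j0 :
  (forall i, \sum_(j < m) D i j = 0) -> D i0 j0 != 0 -> exists i j, D i j < 0.
Proof.
move=> row0; case: ltgtP => // [neg|pos] _; first by exists i0, j0.
suff /existsP[j neg] : [exists j, D i0 j < 0] by exists i0, j.
apply: contraT; rewrite negb_exists => /forallP nneg.
suff : 0 < \sum_(j < m) D i0 j by rewrite row0 ltxx.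
rewrite (bigD1 j0) //= ltr_pwDl // sumr_ge0 // => j _.
by rewrite leNgt nneg.
Qed.

Definition perturb F t D i j := F i j + t * D i j.

Lemma perturbN F t D : perturb F t (fun i j => - D i j) = perturb F (- t) D.
Proof.
by apply/funext => i; apply/funext => j; rewrite /perturb mulrN mulNr.
Qed.

(* [t] is the minimum of [F k / - D k] over the negative entries of [D]: the
   largest step keeping [F + t D] nonnegative. *)
Lemma exists_perturb_supp_lt F D :
  (forall i j, 0 <= F i j) -> (forall i j, F i j = 0 -> D i j = 0) ->
  (exists i j, D i j < 0) ->
  exists t, [/\ 0 < t, forall i j, 0 <= perturb F t D i j &
                (#|supp (perturb F t D)| < #|supp F|)%N].
Proof.
move=> F_ge0 D_supp [i0 [j0 neg0]].
have F_gt0 k : D k.1 k.2 < 0 -> 0 < F k.1 k.2.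
  move=> neg; rewrite lt_def F_ge0 andbT; apply: contraTneq neg => F0.
  by rewrite D_supp // ltxx.
case: (@arg_minP _ _ _ (i0, j0) (fun k => D k.1 k.2 < 0)
   (fun k => F k.1 k.2 / - D k.1 k.2) neg0) => km /= negm minm.
set t := F km.1 km.2 / - D km.1 km.2.
have t_gt0 : 0 < t by rewrite divr_gt0 ?F_gt0 // oppr_gt0.
exists t; split => // [i j|].
  rewrite /perturb; case: (ltP (D i j) 0) => [neg|nneg].
    have := minm (i, j) neg; rewrite /= ler_pdivlMr ?oppr_gt0 // mulrN -/t.
    lra.
  by rewrite addr_ge0 // mulr_ge0 // ltW.
apply: proper_card; apply/properP; split.
  apply/fintype.subsetP => k; rewrite !inE; apply: contraNN => /eqP Fk0.
  by rewrite /perturb Fk0 D_supp // mulr0 addr0.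
exists km; rewrite !inE ?negbK; first by rewrite gt_eqF ?F_gt0.
by rewrite /perturb /t; apply/eqP; field; rewrite lt_eqF.
Qed.

Lemma sum_used_cols F (g : 'I_m -> R) :
  (forall j, j \notin used_cols F -> g j = 0) ->
  \sum_(k < #|used_cols F|) g (enum_val k) = \sum_(j < m) g j.
Proof.
move=> g0; rewrite -(big_enum_val (A := mem (used_cols F))) big_mkcond /=.
by apply: eq_bigr => j _; case: ifP => // /negbT /g0.
Qed.

Definition supp_lift F (u : 'rV[R]_#|supp F|) i j :=
  \sum_(k < #|supp F|) u 0 k * (enum_val k == (i, j))%:R.

Lemma supp_lift_eq0 F (u : 'rV[R]_#|supp F|) i j :
  F i j = 0 -> supp_lift u i j = 0.
Proof.
move=> Fij0; rewrite /supp_lift big1 // => k _.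
case: eqP => [ek|]; last by rewrite mulr0.
by have := enum_valP k; rewrite ek inE /= Fij0 eqxx.
Qed.

Lemma supp_lift_neq0 F (u : 'rV[R]_#|supp F|) :
  u != 0 -> exists i j, supp_lift u i j != 0.
Proof.
move=> nz_u; have /existsP[k uk] : [exists k, u 0 k != 0].
  apply: contraR nz_u; rewrite negb_exists => /forallP u0.
  by apply/eqP/rowP => k; rewrite mxE; apply/eqP/negPn/u0.
exists (enum_val k).1, (enum_val k).2.
rewrite /supp_lift (bigD1 k) //= -surjective_pairing eqxx mulr1 big1 ?addr0 //.
by move=> k' nk; rewrite (inj_eq enum_val_inj) (negbTE nk) mulr0.
Qed.

Lemma sum_supp_lift_row F (u : 'rV[R]_#|supp F|) i :
  \sum_(j < m) supp_lift u i j =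
  \sum_(k < #|supp F|) u 0 k * ((enum_val k).1 == i)%:R.
Proof.
rewrite exchange_big; apply: eq_bigr => k _; rewrite -mulr_sumr; congr (_ * _).
case: (enum_val k) => i' j'; rewrite (bigD1 j') //= big1 ?addr0.
  by rewrite xpair_eqE eqxx andbT.
by move=> j nj; rewrite xpair_eqE [j' == j]eq_sym (negbTE nj) andbF.
Qed.

Lemma sum_supp_lift_col F (u : 'rV[R]_#|supp F|) j (g : 'I_n -> R) :
  \sum_(i < n) g i * supp_lift u i j =
  \sum_(k < #|supp F|) u 0 k * (((enum_val k).2 == j)%:R * g (enum_val k).1).
Proof.
under eq_bigr do rewrite mulr_sumr.
rewrite exchange_big; apply: eq_bigr => k _.
under eq_bigr do rewrite mulrCA; rewrite -mulr_sumr; congr (_ * _).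
case: (enum_val k) => i' j'; rewrite (bigD1 i') //= big1 ?addr0.
  by rewrite xpair_eqE eqxx mulrC.
by move=> i ni; rewrite xpair_eqE [i' == i]eq_sym (negbTE ni) mulr0.
Qed.

End Support.

Section SmpcMatrix.
Variables (R : realFieldType) (n m : nat) (a p : 'I_n -> R) (b : 'I_m -> R).
Hypothesis p_gt0 : forall i, 0 < p i.
Implicit Types F D : 'I_n -> 'I_m -> R.

Definition col_mass F j := \sum_(i < n) p i * F i j.

Definition is_smpc_matrix F := [/\ forall i j, 0 <= F i j,
  forall i, \sum_(j < m) F i j = 1 &
  forall j, \sum_(i < n) p i * a i * F i j = col_mass F j * b j].

Definition is_smpc_direction D :=
  (forall i, \sum_(j < m) D i j = 0) /\
  (forall j, \sum_(i < n) p i * (a i - b j) * D i j = 0).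

Definition plan_int F (f : R -> R) := \sum_(j < m) col_mass F j * f (b j).

Lemma col_mass_perturb F t D j :
  col_mass (perturb F t D) j = col_mass F j + t * col_mass D j.
Proof.
rewrite /col_mass mulr_sumr -big_split.
by apply: eq_bigr => i _ /=; rewrite /perturb; ring.
Qed.

Lemma plan_int_perturb F t D f :
  plan_int (perturb F t D) f = plan_int F f + t * plan_int D f.
Proof.
rewrite /plan_int mulr_sumr -big_split; apply: eq_bigr => j _.
by rewrite col_mass_perturb /=; ring.
Qed.

Lemma is_smpc_matrix_perturb F t D :
  is_smpc_matrix F -> is_smpc_direction D ->
  (forall i j, 0 <= perturb F t D i j) -> is_smpc_matrix (perturb F t D).
Proof.
move=> [_ F_row F_bar] [D_row D_bar] G_ge0; split => // [i|j].
  by rewrite big_split /= -mulr_sumr D_row F_row mulr0 addr0.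
have D_bar' : \sum_(i < n) p i * a i * D i j = col_mass D j * b j.
  apply/eqP; rewrite -subr_eq0 -[X in _ == X](D_bar j).
  rewrite /col_mass mulr_suml -sumrB.
  by apply/eqP/eq_bigr => i _; ring.
rewrite col_mass_perturb mulrDl -F_bar -mulrA -D_bar' mulr_sumr -big_split.
by apply: eq_bigr => i _ /=; rewrite /perturb; ring.
Qed.

Lemma col_mass_gt0 F j :
  (forall i j, 0 <= F i j) -> j \in used_cols F -> 0 < col_mass F j.
Proof.
move=> F_ge0; rewrite inE => /card_gt0P[i]; rewrite inE => Fij.
rewrite /col_mass (bigD1 i) //= ltr_pwDl //.
  by rewrite mulr_gt0 // lt_def Fij F_ge0.
by apply: sumr_ge0 => k _; rewrite mulr_ge0 // ltW.
Qed.

Lemma col_supp_le1_barycenter F i j :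
  is_smpc_matrix F -> (#|col_supp F j| <= 1)%N -> F i j != 0 -> a i = b j.
Proof.
move=> [_ _ F_bar] col1 Fij.
have F_other k : k != i -> F k j = 0.
  move=> nk; apply: contraTeq col1 => Fkj; rewrite -ltnNge.
  apply: (@leq_trans #|[set i; k]|); first by rewrite cards2 eq_sym nk.
  apply: subset_leq_card; apply/fintype.subsetP => x.
  by rewrite !inE => /orP[]/eqP->.
have col_sum (g : 'I_n -> R) : \sum_(k < n) g k * F k j = g i * F i j.
  by rewrite (bigD1 i) //= big1 ?addr0 // => k nk; rewrite F_other // mulr0.
have := F_bar j; rewrite /col_mass (col_sum (fun k => p k * a k)) col_sum /=.
rewrite mulrAC => /mulfI; apply.
by rewrite mulf_neq0 // gt_eqF.
Qed.

Lemma exists_smpc_direction F :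
  is_smpc_matrix F -> (n < #|used_cols F|)%N ->
  exists D, [/\ exists i j, D i j != 0, forall i j, F i j = 0 -> D i j = 0
              & is_smpc_direction D].
Proof.
move=> smpcF used_gt.
(* In the coordinates of [supp F], the columns of [row_mx A1 A2] are the row
   sums and the barycentre equations of the mixed columns. *)
pose A1 : 'M[R]_(#|supp F|, n) := \matrix_(k, i) ((enum_val k).1 == i)%:R.
pose A2 : 'M[R]_(#|supp F|, #|mixed_cols F|) := \matrix_(k, l)
  (((enum_val k).2 == enum_val l)%:R *
   (p (enum_val k).1 * (a (enum_val k).1 - b (enum_val k).2))).
have [u nz_u] :=
  exists_nonzero_left_kernel (row_mx A1 A2) (card_used_mixed_lt used_gt).
rewrite mul_mx_row -row_mx0 => /eq_row_mx[uA1 uA2].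
exists (supp_lift u); split => [|i j|]; first exact: supp_lift_neq0.
  exact: supp_lift_eq0.
split=> [i|j].
  transitivity ((u *m A1) 0 i); last by rewrite uA1 mxE.
  by rewrite mxE sum_supp_lift_row; apply: eq_bigr => k _; rewrite mxE.
case: (boolP (j \in mixed_cols F)) => [mixed_j|].
  transitivity ((u *m A2) 0 (enum_rank_in mixed_j j)); last by rewrite uA2 mxE.
  rewrite mxE (sum_supp_lift_col _ _ (fun i => p i * (a i - b j))).
  apply: eq_bigr => k _; rewrite mxE enum_rankK_in //.
  by case: eqP => [->|]; rewrite ?mul0r.
rewrite inE -leqNgt => col1; rewrite big1 // => i _.
have [Fij0|Fij] := eqVneq (F i j) 0; first by rewrite supp_lift_eq0 // mulr0.
by rewrite (col_supp_le1_barycenter smpcF col1 Fij) subrr mulr0 mul0r.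
Qed.

End SmpcMatrix.

Section Mixtures.
Variable R : realType.
Implicit Types (C : atomic R -> Prop) (S : atomic R) (s : seq (R * atomic R)).

Definition mix (l : R) s1 s2 :=
  [seq (l * x.1, x.2) | x <- s1] ++ [seq ((1 - l) * x.1, x.2) | x <- s2].

Lemma is_mixture_of_mix C l s1 s2 : 0 <= l <= 1 ->
  is_mixture_of C s1 -> is_mixture_of C s2 -> is_mixture_of C (mix l s1 s2).
Proof.
move=> /andP[l_ge0 l_le1] [C1 sum1] [C2 sum2]; split; last first.
  by rewrite big_cat !big_map /= -!mulr_sumr sum1 sum2; ring.
move=> x /List.in_app_iff[] /List.in_map_iff[y [<- y_in]] /=.
  by have [y_ge0 Cy] := C1 y y_in; rewrite mulr_ge0.
by have [y_ge0 Cy] := C2 y y_in; rewrite mulr_ge0 // subr_ge0.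
Qed.

Lemma mixture_int_mix l s1 s2 f :
  mixture_int (mix l s1 s2) f =
  l * mixture_int s1 f + (1 - l) * mixture_int s2 f.
Proof.
rewrite /mixture_int big_cat !big_map !mulr_sumr.
by congr (_ + _); apply: eq_bigr => x _; rewrite mulrA.
Qed.

Lemma is_mixture_of_single C S : C S -> is_mixture_of C [:: (1, S)].
Proof. by move=> CS; split=> [x [<-|[]] //|]; rewrite big_seq1. Qed.

Lemma mixture_int_single S f : mixture_int [:: (1, S)] f = aint S f.
Proof. by rewrite /mixture_int big_seq1 mul1r. Qed.

End Mixtures.

Section Decomposition.
Variables (R : realType) (n m : nat) (a p : 'I_n -> R) (b : 'I_m -> R).
Hypotheses (p_gt0 : forall i, 0 < p i) (b_inj : injective b).

Lemma smpc_of_matrix F :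
  is_smpc_matrix a p b F -> (#|used_cols F| <= n)%N ->
  exists2 S : atomic R, is_smpc a p S /\ (asz S <= n)%N &
    aint S =1 plan_int p b F.
Proof.
move=> [F_ge0 F_row F_bar] used_le.
exists (@Atomic R #|used_cols F| (fun k => b (enum_val k))
          (fun k => col_mass p F (enum_val k))); last first.
  move=> f; rewrite /aint.
  rewrite (sum_used_cols (g := fun j => col_mass p F j * f (b j))) //.
  move=> j /unused_col_eq0 F0.
  by rewrite /col_mass big1 ?mul0r // => i _; rewrite F0 mulr0.
split=> //; split; first by move=> k k' /b_inj /enum_val_inj.
split; first by move=> k; apply: col_mass_gt0 => //; exact: enum_valP.
exists (\matrix_(i, k) F i (enum_val k)).
split; first by move=> i k; rewrite mxE.
split=> [i|].
  under eq_bigr do rewrite mxE.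
  by rewrite (sum_used_cols (g := F i)) ?F_row // => j /unused_col_eq0.
by split=> k; under eq_bigr do rewrite mxE; rewrite ?F_bar.
Qed.

Lemma smpc_matrix_mixture F : is_smpc_matrix a p b F ->
  exists2 s, is_mixture_of (fun S => is_smpc a p S /\ (asz S <= n)%N) s &
    mixture_int s =1 plan_int p b F.
Proof.
have [N] := ubnP #|supp F|; elim: N F => // N IH F.
rewrite ltnS => supp_le smpcF.
have [used_le|used_gt] := leqP #|used_cols F| n.
  have [S smallS intS] := smpc_of_matrix smpcF used_le.
  exists [:: (1, S)]; first exact: is_mixture_of_single.
  by move=> f; rewrite mixture_int_single intS.
have [D [[i [j Dij]] D_supp dirD]] := exists_smpc_direction p_gt0 smpcF used_gt.
have [F_ge0 _ _] := smpcF.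
have [t1 [t1_gt0 G1_ge0 G1_supp]] :=
  exists_perturb_supp_lt F_ge0 D_supp (exists_neg_entry dirD.1 Dij).
have negD_supp i' j' : F i' j' = 0 -> - D i' j' = 0.
  by move=> /D_supp->; rewrite oppr0.
have negD_row i' : \sum_(j' < m) - D i' j' = 0 by rewrite sumrN dirD.1 oppr0.
have negD_ij : - D i j != 0 by rewrite oppr_eq0.
have [t2 [t2_gt0]] :=
  exists_perturb_supp_lt F_ge0 negD_supp (exists_neg_entry negD_row negD_ij).
rewrite perturbN => G2_ge0 G2_supp.
have [s1 mix1 int1] :=
  IH _ (leq_trans G1_supp supp_le) (is_smpc_matrix_perturb smpcF dirD G1_ge0).
have [s2 mix2 int2] :=
  IH _ (leq_trans G2_supp supp_le) (is_smpc_matrix_perturb smpcF dirD G2_ge0).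
have t12_gt0 : 0 < t1 + t2 by rewrite addr_gt0.
exists (mix (t2 / (t1 + t2)) s1 s2) => [|f].
  apply: is_mixture_of_mix => //.
  by rewrite ler_pdivrMr // mul1r lerDr divr_ge0 ?ltW.
rewrite mixture_int_mix int1 int2 !plan_int_perturb.
by field; rewrite gt_eqF.
Qed.

End Decomposition.

Lemma smpc_mixture (R : realType) n (a p : 'I_n -> R) (S : atomic R) :
  (forall i, 0 < p i) -> is_smpc a p S ->
  exists2 s, is_mixture_of (fun S => is_smpc a p S /\ (asz S <= n)%N) s &
    mixture_int s =1 aint S.
Proof.
move=> p_gt0 [b_inj [_ [F [F_ge0 [F_row [F_mass F_bar]]]]]].
have smpcF : is_smpc_matrix a p (apt S) (fun i j => F i j).
  by split=> // j; rewrite /col_mass F_mass F_bar.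
have [s mix_s int_s] := smpc_matrix_mixture p_gt0 b_inj smpcF.
exists s => // f; rewrite int_s; apply: eq_bigr => j _.
by rewrite /col_mass F_mass.
Qed.

Theorem corollary1 (R : realType) (n : nat) (a p : 'I_n -> R)
  (Ha : forall i j : 'I_n, (i < j)%N -> a i < a j)
  (Hp : forall i, 0 < p i) (Hp1 : \sum_(i < n) p i = 1)
  (Q : probability R R) :
  is_mpc a p Q ->
  is_mixture (fun S => is_smpc a p S /\ (asz S <= n)%N) Q.
Proof.
move=> [S [smpcS cvgS]].
have /choice[s mix_s] : forall k, exists s,
    is_mixture_of (fun S => is_smpc a p S /\ (asz S <= n)%N) s /\
    mixture_int s =1 aint (S k).
  by move=> k; have [s ? ?] := smpc_mixture Hp (smpcS k); exists s.
exists s; split=> [k|f bcf]; first by case: (mix_s k).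
rewrite (_ : (fun k => _) = fun k => (aint (S k) f)%:E); first exact: cvgS.
by apply/funext => k; rewrite (mix_s k).2.
Qed.
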